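(* Let $n\geq3$ and let $C_n$ be the cycle graph with vertices $x_1,\ldots,x_n$ and edges $\{x_i,x_{i+1}\}$ ($1\le i\le n-1$) and $\{x_n,x_1\}$, so that $NI(C_n)=(x_ix_{i+1}x_{i+2} : i=1,\ldots,n)\subset R=K[x_1,\ldots,x_n]$ with indices read modulo $n$. Then $NI(C_n)$ is normal, has the strong persistence property, and has the persistence property.
   Context: For a simple graph $G$, $N_G[i]=\{j:\{i,j\}\in E(G)\}\cup\{i\}$ and $NI(G)=(\prod_{j\in N_G[i]}x_j : i\in V(G))$. An ideal $I$ is normal if $\overline{I^k}=I^k$ for all $k\geq1$ (integral closure). It has the strong persistence property if $(I^{k+1}:I)=I^k$ for all $k\ge1$, and the persistence property if $\mathrm{Ass}(R/I^k)\subseteq\mathrm{Ass}(R/I^{k+1})$ for all $k\ge1$. *)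

From mathcomp Require Import all_boot all_order all_algebra.
From mathcomp Require Import mpoly.
From Stdlib Require List.

Set Implicit Arguments.
Unset Strict Implicit.
Unset Printing Implicit Defensive.

Import GRing.Theory.
Local Open Scope ring_scope.

Section Ideals.
Variable R : comNzRingType.

Definition pset := R -> Prop.

Definition set_eq (A B : pset) : Prop := forall x, A x <-> B x.

Definition ideal_span (S : pset) : pset :=
  fun r => exists s : seq (R * R),
    (forall p, List.In p s -> S p.2) /\ r = \sum_(p <- s) p.1 * p.2.

Definition is_ideal (I : pset) : Prop :=
  [/\ I 0, (forall a b, I a -> I b -> I (a + b)) &
      (forall r a, I a -> I (r * a))].

Definition ideal_mul (I J : pset) : pset :=
  ideal_span (fun r => exists a b, [/\ I a, J b & r = a * b]).

Definition ideal_exp (I : pset) (k : nat) : pset :=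
  iter k (ideal_mul I) (fun _ => True).

Definition int_closure (I : pset) : pset :=
  fun r => exists (m : nat) (a : nat -> R),
    [/\ (0 < m)%N,
        (forall i, (1 <= i <= m)%N -> ideal_exp I i (a i)) &
        r ^+ m + \sum_(1 <= i < m.+1) a i * r ^+ (m - i) = 0].

Definition colon (J I : pset) : pset := fun r => forall a, I a -> J (r * a).

Definition is_prime_ideal (P : pset) : Prop :=
  [/\ is_ideal P, ~ P 1 & forall a b, P (a * b) -> P a \/ P b].

(* P \in Ass(R/I) : P is a prime ideal of the form (I : r). *)
Definition ass (I P : pset) : Prop :=
  is_prime_ideal P /\ exists r, forall x, P x <-> I (x * r).

Definition normal_ideal (I : pset) : Prop :=
  forall k, (1 <= k)%N -> set_eq (int_closure (ideal_exp I k)) (ideal_exp I k).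

Definition strong_persistence (I : pset) : Prop :=
  forall k, (1 <= k)%N -> set_eq (colon (ideal_exp I k.+1) I) (ideal_exp I k).

Definition persistence (I : pset) : Prop :=
  forall k, (1 <= k)%N -> forall P, ass (ideal_exp I k) P -> ass (ideal_exp I k.+1) P.

End Ideals.

(* Closed neighborhood ideal of a simple graph on vertices 'I_n
   (adjacency relation g), in K[x_0, ..., x_{n-1}]. *)
Definition NI (K : fieldType) (n : nat) (g : rel 'I_n) : pset {mpoly K[n]} :=
  ideal_span (fun r => exists i : 'I_n,
    r = \prod_(j : 'I_n | (j == i) || g i j) 'X_j).

Definition cycle_rel (n : nat) : rel 'I_n :=
  fun i j => (j == ordS i) || (i == ordS j).

(* All powers of NI(g) are monomial ideals: x^m lies in NI(g)^k iff the
   exponent vector m dominates a sum of k closed neighbourhood vectors N[i]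
   ("m is covered by k neighbourhoods").  Every cover satisfies the weight
   bounds "w.N[i] >= r for all i implies w.m >= r k"; the heart of the proof
   is the converse for C_n, an LP duality statement proved by turning covers
   into prefix sums and solving a system of difference constraints by
   Fourier-Motzkin elimination.  Given this duality for a graph g:
   - normality: grading by a weighting w, an equation of integral dependence
     over NI(g)^k forces the least weighted degree of f to be >= r k;
   - strong persistence: if f NI(g) <= NI(g)^(k+1), multiply a monomial of f
     by the generator of least weight;
   and persistence follows from strong persistence for any finitely
   generated ideal, because a prime that is a finite intersection of ideals
   equals one of them. *)

From mathcomp Require Import all_boot all_order all_algebra.
From mathcomp Require Import mpoly.
From mathcomp Require Import zify ring lra.
From Stdlib Require Import Classical.
Import GRing.Theory Num.Theory Order.TTheory.
Local Open Scope ring_scope.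

Set Implicit Arguments.
Unset Strict Implicit.

Section DifferenceConstraints.
(* [implied a b c] is an abstract family of "derivable" inequalities
   x_b <= x_a + c on integer unknowns x_0, x_1, ...: it is closed under
   chaining and derives no negative cycle. *)
Variable implied : nat -> nat -> int -> Prop.
Hypothesis implied_chain :
  forall a b d c c', implied a b c -> implied b d c' -> implied a d (c + c').
Hypothesis implied_cycle : forall a c, implied a a c -> 0 <= c.

Definition constraint := (nat * nat * int)%type.
Definition satisfies (x : nat -> int) (t : constraint) := x t.1.2 <= x t.1.1 + t.2.

Definition derivable_system (m : nat) (s : seq constraint) :=
  forall t, t \in s -> [/\ implied t.1.1 t.1.2 t.2, (t.1.1 < m)%N & (t.1.2 < m)%N].

Definition upper_bounds (v : nat) (s : seq constraint) :=
  [seq t <- s | (t.1.1 != v) && (t.1.2 == v)].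
Definition lower_bounds (v : nat) (s : seq constraint) :=
  [seq t <- s | (t.1.1 == v) && (t.1.2 != v)].

(* Fourier-Motzkin elimination of x_v: keep the constraints not involving x_v
   and add every chain (lower bound of x_v) <= x_v <= (upper bound of x_v). *)
Definition eliminate (v : nat) (s : seq constraint) : seq constraint :=
  [seq t <- s | (t.1.1 != v) && (t.1.2 != v)] ++
  [seq ((t.1.1, t'.1.2), t.2 + t'.2) | t <- upper_bounds v s, t' <- lower_bounds v s].

Fixpoint max_lower (x : nat -> int) (s : seq constraint) (D : int) :=
  if s is t :: s' then Num.max (max_lower x s' D) (x t.1.2 - t.2) else D.
Fixpoint min_upper (x : nat -> int) (s : seq constraint) :=
  if s is t :: s' then Num.min (min_upper x s') (x t.1.1 + t.2) else 0.

Lemma max_lower_ge x s D :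
  D <= max_lower x s D /\ forall t, t \in s -> x t.1.2 - t.2 <= max_lower x s D.
Proof.
elim: s => [|t s [IH1 IH2]] /=; first by split.
split; first by rewrite le_max IH1.
move=> t'; rewrite inE => /orP [/eqP ->|h]; first by rewrite le_max lexx orbT.
by rewrite le_max IH2.
Qed.

Lemma max_lower_le x s D B : D <= B ->
  (forall t, t \in s -> x t.1.2 - t.2 <= B) -> max_lower x s D <= B.
Proof.
move=> hD; elim: s => [|t s IH] h //=.
rewrite ge_max IH ?h ?mem_head // => t' ht'; apply: h; by rewrite inE ht' orbT.
Qed.

Lemma min_upper_le x s :
  min_upper x s <= 0 /\ forall t, t \in s -> min_upper x s <= x t.1.1 + t.2.
Proof.
elim: s => [|t s [IH1 IH2]] /=; first by split.
split; first by rewrite ge_min IH1.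
move=> t'; rewrite inE => /orP [/eqP ->|h]; first by rewrite ge_min lexx orbT.
by rewrite ge_min IH2.
Qed.

Lemma eliminate_derivable m s :
  derivable_system m.+1 s -> derivable_system m (eliminate m s).
Proof.
move=> Hs t; rewrite mem_cat => /orP [].
  rewrite mem_filter => /andP [/andP [h1 h2] /Hs [g l1 l2]]; split => //.
    by rewrite ltn_neqAle h1 -ltnS.
  by rewrite ltn_neqAle h2 -ltnS.
case/allpairsP => [[t1 t2]] /= [].
rewrite !mem_filter => /andP [/andP [a1 /eqP b1] /Hs [g1 l1 _]].
move=> /andP [/andP [/eqP a2 b2] /Hs [g2 _ l2]] -> /=.
split.
- by apply: implied_chain _ _ _ _ _ g1 _; rewrite b1 -a2.
- by rewrite ltn_neqAle a1 -ltnS.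
- by rewrite ltn_neqAle b2 -ltnS.
Qed.

(* A solution of the eliminated system extends to a solution of [s]: put x_m
   between its largest lower bound and its smallest upper bound. *)
Lemma eliminate_extend m s x : derivable_system m.+1 s ->
  (forall t, t \in eliminate m s -> satisfies x t) ->
  exists y, forall t, t \in s -> satisfies y t.
Proof.
move=> Hs Hx.
pose M := max_lower x (lower_bounds m s) (min_upper x (upper_bounds m s)).
exists (fun i => if i == m then M else x i) => t ht; rewrite /satisfies /=.
have [g _ _] := Hs t ht.
case E1: (t.1.1 == m); case E2: (t.1.2 == m).
- by move/eqP: E1 => E1; move/eqP: E2 => E2; rewrite E1 E2 in g; have := implied_cycle g; lra.
- have [_ H] := max_lower_ge x (lower_bounds m s) (min_upper x (upper_bounds m s)).
  have : t \in lower_bounds m s by rewrite mem_filter E1 E2 ht.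
  by move/H; rewrite -/M; lra.
- have tup : t \in upper_bounds m s by rewrite mem_filter E1 E2 ht.
  suff : M <= x t.1.1 + t.2 by [].
  apply: max_lower_le; first by have [_ H] := min_upper_le x (upper_bounds m s); exact: H.
  move=> t' tl.
  have : ((t.1.1, t'.1.2), t.2 + t'.2) \in eliminate m s.
    by rewrite mem_cat; apply/orP; right; apply/allpairsP; exists (t, t').
  by move/Hx; rewrite /satisfies /=; lra.
- by apply: Hx; rewrite mem_cat mem_filter E1 E2 ht.
Qed.

Lemma derivable_system_feasible m s :
  derivable_system m s -> exists x, forall t, t \in s -> satisfies x t.
Proof.
elim: m s => [|m IH] s Hs.
  by exists (fun _ => 0) => t /Hs [_]; rewrite ltn0.
have [x Hx] := IH _ (eliminate_derivable Hs).
exact: eliminate_extend Hs Hx.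
Qed.
End DifferenceConstraints.

Lemma In_cat (T : Type) (p : T) s t : List.In p (s ++ t) -> List.In p s \/ List.In p t.
Proof.
elim: s => [|q s IH] /=; first by right.
by case => [->|/IH [h|h]]; [left; left|left; right|right].
Qed.

Lemma In_map (T U : Type) (f : T -> U) (p : U) s :
  List.In p [seq f q | q <- s] -> exists q, p = f q /\ List.In q s.
Proof.
elim: s => [|q s IH] //= [<-|/IH [q' [-> h]]]; first by exists q; split => //; left.
by exists q'; split => //; right.
Qed.

Lemma mem_of_In (T : eqType) (x : T) s : List.In x s -> x \in s.
Proof. by elim: s => //= y s IH [->|/IH h]; rewrite inE ?eqxx ?h ?orbT. Qed.

Section IdealBasics.
Variable R : comNzRingType.

Lemma ideal_span_is_ideal (S : pset R) : is_ideal (ideal_span S).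
Proof.
split.
- by exists [::]; rewrite big_nil.
- move=> a b [s [hs ->]] [t [ht ->]]; exists (s ++ t); split; last by rewrite big_cat.
  by move=> p hp; case: (In_cat hp) => h; [exact: hs | exact: ht].
- move=> r a [s [hs ->]]; exists [seq (r * p.1, p.2) | p <- s]; split.
    by move=> p hp; case: (In_map hp) => q [-> hq]; exact: (hs q hq).
  by rewrite big_map mulr_sumr; apply: eq_bigr => p _; rewrite mulrA.
Qed.

Lemma ideal_span_gen (S : pset R) x : S x -> ideal_span S x.
Proof. by move=> h; exists [:: (1, x)]; split => [p [<-|[]]|]; rewrite ?big_seq1 ?mul1r. Qed.

Lemma ideal_exp_is_ideal (I : pset R) k : is_ideal (ideal_exp I k).
Proof. by case: k => [|k]; [split | exact: ideal_span_is_ideal]. Qed.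

Lemma ideal_sum (J : pset R) (T : Type) (s : seq T) (F : T -> R) : is_ideal J ->
  (forall t, List.In t s -> J (F t)) -> J (\sum_(t <- s) F t).
Proof.
move=> [h0 hD _]; elim: s => [|t s IH] h; first by rewrite big_nil.
by rewrite big_cons; apply: hD; [apply: h; left | apply: IH => t' ht'; apply: h; right].
Qed.

Lemma ideal_span_sub (J S : pset R) : is_ideal J ->
  (forall a, S a -> J a) -> forall x, ideal_span S x -> J x.
Proof.
move=> hJ hS x [s [hs ->]]; apply: ideal_sum => // p hp.
by have [_ _ hM] := hJ; apply/hM/hS/hs.
Qed.

Lemma mul_ideal_span (J S : pset R) c : is_ideal J ->
  (forall a, S a -> J (c * a)) -> forall x, ideal_span S x -> J (c * x).
Proof.
move=> hJ hS x [s [hs ->]]; rewrite mulr_sumr; apply: ideal_sum => // p hp.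
by have [_ _ hM] := hJ; rewrite mulrCA; apply/hM/hS/hs.
Qed.
End IdealBasics.

Section Neighbourhoods.
Variables (n : nat) (g : rel 'I_n).

Definition nbhd (i v : 'I_n) : bool := (v == i) || g i v.

(* [nbhd_cover k u]: the exponent vector u dominates a sum of k closed
   neighbourhood vectors, i.e. x^u lies in NI(g)^k. *)
Definition nbhd_cover (k : nat) (u : 'I_n -> nat) :=
  exists c : 'I_n -> nat,
    (\sum_i c i = k)%N /\ forall v, (\sum_i c i * nbhd i v <= u v)%N.

Definition weight_bound (k : nat) (u : 'I_n -> nat) :=
  forall (w : 'I_n -> nat) (r : nat),
    (forall i, r <= \sum_v w v * nbhd i v)%N -> (r * k <= \sum_v w v * u v)%N.

Lemma sum_indicator (f : 'I_n -> nat) (a : 'I_n) : (\sum_i f i * (i == a) = f a)%N.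
Proof.
by rewrite (bigD1 a) //= eqxx muln1 big1 ?addn0 // => i /negbTE ->; rewrite muln0.
Qed.

Lemma sum_mulDl (w w' f : 'I_n -> nat) :
  (\sum_v (w v + w' v) * f v = \sum_v w v * f v + \sum_v w' v * f v)%N.
Proof. by rewrite -big_split; apply: eq_bigr => v _; rewrite mulnDl. Qed.

Lemma cover_weight_bound k u : nbhd_cover k u -> weight_bound k u.
Proof.
move=> [c [<- h]] w r hr.
apply: (@leq_trans (\sum_v w v * \sum_i c i * nbhd i v)).
  rewrite big_distrr /=.
  under [X in (_ <= X)%N]eq_bigr => v _ do rewrite big_distrr /=.
  rewrite exchange_big /= leq_sum // => i _.
  have e : (\sum_v w v * (c i * nbhd i v) = c i * \sum_v w v * nbhd i v)%N.
    by rewrite big_distrr; apply: eq_bigr => v _ /=; lia.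
  by rewrite e mulnC leq_mul2l hr orbT.
by apply: leq_sum => v _; rewrite leq_mul2l h orbT.
Qed.
End Neighbourhoods.

Section CycleNeighbourhoods.
Variable n : nat.
Local Notation N := (nbhd (@cycle_rel n)).

Lemma ordS_val (v : 'I_n) : (ordS v : nat) = if (v.+1 < n)%N then v.+1 else 0%N.
Proof.
rewrite /ordS /=; case: ifP => h; first by rewrite modn_small.
have -> : v.+1 = n by have := ltn_ord v; lia.
by rewrite modnn.
Qed.

Lemma ord_pred_val (v : 'I_n) :
  (ord_pred v : nat) = if v == 0%N :> nat then n.-1 else v.-1.
Proof.
have hv := ltn_ord v.
rewrite /ord_pred /=; case: ifP => /eqP h.
  by rewrite h add0n modn_small //; lia.
have -> : ((v + n).-1 = 1 * n + v.-1)%N by lia.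
by rewrite modnMDl modn_small //; lia.
Qed.

Lemma cycle_nbhdE (i v : 'I_n) : N i v = [|| i == v, i == ord_pred v | i == ordS v].
Proof.
rewrite /nbhd /cycle_rel eq_sym; congr (_ || _); congr (_ || _).
by apply/eqP/eqP => ->; [rewrite ordSK | rewrite ord_predK].
Qed.

Lemma cycle_nbhd_val (i v : 'I_n) : N i v = [|| (i : nat) == v,
   (i : nat) == (if v == 0%N :> nat then n.-1 else v.-1) |
   (i : nat) == (if (v.+1 < n)%N then v.+1 else 0%N)].
Proof. by rewrite cycle_nbhdE -ord_pred_val -ordS_val. Qed.

Hypothesis hn : (3 <= n)%N.

(* Since n >= 3, the three vertices v-1, v, v+1 are distinct. *)
Lemma cycle_nbhd_sum (f : 'I_n -> nat) (v : 'I_n) :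
  (\sum_i f i * N i v = f v + f (ord_pred v) + f (ordS v))%N.
Proof.
have hv := ltn_ord v.
have d1 : v != ord_pred v.
  by apply/eqP => /(congr1 (@nat_of_ord n)); rewrite ord_pred_val /=; case: ifP => /eqP; lia.
have d2 : v != ordS v.
  by apply/eqP => /(congr1 (@nat_of_ord n)); rewrite ordS_val /=; case: ifP; lia.
have d3 : ord_pred v != ordS v.
  apply/eqP => /(congr1 (@nat_of_ord n)); rewrite ordS_val ord_pred_val /=.
  by case: ifP => /eqP; case: ifP; lia.
have e i : (N i v : nat) = ((i == v) + (i == ord_pred v) + (i == ordS v))%N.
  rewrite cycle_nbhdE.
  case: (eqVneq i v) => [->|h1]; first by rewrite (negbTE d1) (negbTE d2).
  case: (eqVneq i (ord_pred v)) => [->|h2]; first by rewrite (negbTE d3).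
  by case: (eqVneq i (ordS v)).
under eq_bigr => i _ do rewrite e !mulnDr.
by rewrite !big_split /= !sum_indicator.
Qed.
End CycleNeighbourhoods.

(* A cover c of u is
   encoded by its prefix sums x_j = c_0 + ... + c_(j-1); the conditions on c
   become difference constraints on x (monotonicity, x_n = x_0 + k, and one
   constraint per closed neighbourhood, which is a cyclic interval of three
   consecutive vertices).  Each such constraint is derivable from a weighting
   of the vertices, and the weight bound rules out negative cycles. *)
Section CycleDuality.
Variables (n : nat) (u : 'I_n -> nat) (k : nat).
Hypothesis hn : (3 <= n)%N.
Local Notation N := (nbhd (@cycle_rel n)).

Definition indZ (b : bool) : int := (b : nat)%:Z.

(* [prefix_gap a b c]: a weighting (w, r) certifies that the prefix sums x of
   any cover of u satisfy x_b <= x_a + c; indeed x_b - x_a is the sum of the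
   c_i weighted by [i < b] - [i < a], each at most w.N[i] - r. *)
Definition prefix_gap (a b : nat) (c : int) :=
  exists (w : 'I_n -> nat) (r : int),
    c = (\sum_v w v * u v)%N%:Z - r * k%:Z /\
    forall i : 'I_n, indZ (i < b)%N - indZ (i < a)%N + r <= (\sum_v w v * N i v)%N%:Z.

Lemma prefix_gap_chain a b d c c' :
  prefix_gap a b c -> prefix_gap b d c' -> prefix_gap a d (c + c').
Proof.
move=> [w [r [-> h]]] [w' [r' [-> h']]].
exists (fun v => w v + w' v), (r + r'); split; first by rewrite sum_mulDl PoszD; ring.
by move=> i; have := h i; have := h' i; rewrite sum_mulDl PoszD; lra.
Qed.

Lemma prefix_gap_cycle a c : weight_bound (@cycle_rel n) k u -> prefix_gap a a c -> 0 <= c.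
Proof.
move=> Hw [w [r [-> h]]].
case: r h => r h; last by rewrite NegzE; lia.
have : (r * k <= \sum_v w v * u v)%N by apply: Hw => i; have := h i; rewrite subrr add0r; lia.
lia.
Qed.

Lemma sum_mul0 (f : 'I_n -> nat) : (\sum_v 0 * f v = 0)%N.
Proof. by rewrite big1. Qed.

(* N[v] = {v-1, v, v+1} is the cyclic interval of prefix indices
   [nb_start v, nb_end v), wrapping around [nb_wrap v] times. *)
Definition nb_start (v : 'I_n) : nat := if v == 0%N :> nat then n.-1 else v.-1.
Definition nb_end (v : 'I_n) : nat := if (v.+2 <= n)%N then v.+2 else (v.+2 - n)%N.
Definition nb_wrap (v : 'I_n) : int := if (v == 0%N :> nat) || (n < v.+2)%N then 1 else 0.
Definition nbhd_constraint (v : 'I_n) : constraint :=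
  ((nb_start v, nb_end v), (u v)%:Z - nb_wrap v * k%:Z).

(* Prefix sums of a cover: nondecreasing, total k, and at most u v on N[v]. *)
Definition cover_system : seq constraint :=
  [seq ((j.+1, j), 0) | j <- iota 0 n] ++
  [:: ((0%N, n), k%:Z); ((n, 0%N), - k%:Z)] ++ [seq nbhd_constraint v | v <- enum 'I_n].

Lemma cover_system_derivable : derivable_system prefix_gap n.+1 cover_system.
Proof.
move=> t; rewrite !mem_cat => /or3P [].
- case/mapP => j; rewrite mem_iota add0n => /andP [_ hj] -> /=; split; try lia.
  exists (fun _ => 0%N), 0; split; first by rewrite sum_mul0.
  by move=> i; rewrite sum_mul0 /indZ; lia.
- rewrite !inE => /orP [] /eqP -> /=; split; try lia.
  + exists (fun _ => 0%N), (-1); split; first by rewrite sum_mul0; lia.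
    by move=> i; rewrite sum_mul0 /indZ; have := ltn_ord i; lia.
  + exists (fun _ => 0%N), 1; split; first by rewrite sum_mul0; lia.
    by move=> i; rewrite sum_mul0 /indZ; have := ltn_ord i; lia.
- case/mapP => v _ -> /=; rewrite /nb_start /nb_end.
  have hv := ltn_ord v.
  split; [|by case: ifP; lia|by case: ifP; lia].
  exists (fun v' => (v' == v : nat)), (nb_wrap v); split.
    by under eq_bigr => v' _ do rewrite mulnC; rewrite sum_indicator.
  move=> i; under eq_bigr => v' _ do rewrite mulnC; rewrite sum_indicator.
  have hi := ltn_ord i.
  rewrite cycle_nbhd_val /indZ /nb_wrap.
  move: (i : nat) (v : nat) hi hv => ii vv hi hv.
  repeat (case: ifP => ? /=).
  all: lia.
Qed.

Lemma cover_system_solution : weight_bound (@cycle_rel n) k u ->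
  exists x : nat -> int,
  [/\ forall j, (j < n)%N -> x j <= x j.+1, x n = x 0%N + k%:Z &
      forall v, x (nb_end v) <= x (nb_start v) + ((u v)%:Z - nb_wrap v * k%:Z)].
Proof.
move=> Hw.
have [x hx] := derivable_system_feasible prefix_gap_chain
  (fun a c => prefix_gap_cycle Hw (a := a) (c := c)) cover_system_derivable.
exists x; split.
- move=> j hj; have := hx ((j.+1, j), 0); rewrite /satisfies /= addr0; apply.
  by rewrite mem_cat; apply/orP; left; apply/mapP; exists j; rewrite // mem_iota.
- have := hx ((0%N, n), k%:Z); have := hx ((n, 0%N), - k%:Z).
  rewrite /satisfies /= !mem_cat !inE !eqxx !orbT /=.
  by move=> /(_ isT) h1 /(_ isT) h2; lra.
- move=> v; apply: (hx (nbhd_constraint v)).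
  by rewrite !mem_cat; apply/or3P; constructor 3; apply/mapP; exists v; rewrite ?mem_enum.
Qed.

Theorem cycle_cover : weight_bound (@cycle_rel n) k u -> nbhd_cover (@cycle_rel n) k u.
Proof.
move=> /cover_system_solution [x [mono top bound]].
pose c (i : 'I_n) := `|x i.+1 - x i|%N.
have ce (i : 'I_n) : (c i)%:Z = x i.+1 - x i.
  by rewrite /c gez0_abs // subr_ge0; apply: mono.
exists c; split.
  apply/eqP; rewrite -eqz_nat; apply/eqP.
  rewrite -[Posz (\sum_i c i)]intz sumMz.
  under eq_bigr => i _ do rewrite intz ce.
  rewrite -(big_mkord xpredT (fun i => x i.+1 - x i)) telescope_sumr // top; ring.
move=> v.
rewrite (cycle_nbhd_sum hn) -lez_nat !PoszD !ce.
have := bound v; have hv := ltn_ord v.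
rewrite /nb_start /nb_end /nb_wrap ord_pred_val ordS_val.
case: (eqVneq (v : nat) 0%N) => [v0|vn0].
  rewrite v0 /= (_ : (1 < n)%N = true); last by lia.
  by rewrite prednK; [move=> h; have := top; lra | lia].
rewrite /= prednK; last by lia.
case: ifP => hv1.
  by rewrite (_ : (n < v.+2)%N = false); [lra | lia].
have e : v.+1 = n by lia.
rewrite (_ : (v.+2 - n)%N = 1%N); last by lia.
rewrite (_ : (n < v.+2)%N = true); last by lia.
by rewrite e => h; have := top; lra.
Qed.
End CycleDuality.

Section MonomialIdeals.
Variables (K : fieldType) (n : nat) (g : rel 'I_n).
Local Notation R := {mpoly K[n]}.
Local Notation I := (NI (K:=K) g).

(* [supp_in P f]: every monomial in the support of f has property P.  For an
   upward closed P this is the monomial ideal with exponent set P. *)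
Definition supp_in (P : 'X_{1..n} -> Prop) : pset R :=
  fun f => forall m, m \in msupp f -> P m.
Definition upward_closed (P : 'X_{1..n} -> Prop) := forall m m', P m -> P (m' + m)%MM.

Lemma supp_in_ideal P : upward_closed P -> is_ideal (supp_in P).
Proof.
move=> up; split.
- by move=> m; rewrite mcoeff_msupp raddf0 eqxx.
- by move=> a b ha hb m /msuppD_le; rewrite mem_cat => /orP [/ha|/hb].
- by move=> r a ha m /msuppM_le /allpairsP [[m1 m2] /= [_ h2 ->]]; exact/up/ha.
Qed.

Definition mcover (k : nat) (m : 'X_{1..n}) := nbhd_cover g k (fun v => m v).

Lemma mcover0 m : mcover 0 m.
Proof. by exists (fun _ => 0%N); split => [|v]; rewrite big1. Qed.

Lemma mcover_add a b m1 m2 : mcover a m1 -> mcover b m2 -> mcover (a + b) (m1 + m2)%MM.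
Proof.
move=> [c1 [s1 h1]] [c2 [s2 h2]]; exists (fun i => c1 i + c2 i)%N; split.
  by rewrite big_split /= s1 s2.
by move=> v; rewrite mnmDE sum_mulDl; have := h1 v; have := h2 v; lia.
Qed.

Lemma mcover_up k : upward_closed (mcover k).
Proof.
by move=> m m' [c [s h]]; exists c; split => // v; rewrite mnmDE; have := h v; lia.
Qed.

Lemma supp_in_mul a b X Y : (forall x, X x -> supp_in (mcover a) x) ->
  (forall y, Y y -> supp_in (mcover b) y) ->
  forall z, ideal_mul X Y z -> supp_in (mcover (a + b)) z.
Proof.
move=> hX hY; apply: ideal_span_sub; first exact/supp_in_ideal/mcover_up.
move=> z [x [y [/hX hx /hY hy ->]]] m /msuppM_le /allpairsP [[m1 m2] /= [h1 h2 ->]].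
exact: mcover_add (hx _ h1) (hy _ h2).
Qed.

Definition nbhd_mono (i : 'I_n) : 'X_{1..n} := [multinom (nbhd g i v : nat) | v < n].

Lemma NI_gen_mono (i : 'I_n) :
  \prod_(j : 'I_n | (j == i) || g i j) 'X_j = 'X_[nbhd_mono i] :> R.
Proof.
rewrite (mprodXE K (fun j => U_(j)%MM)); congr mpolyX; apply/mnmP => v.
rewrite mnm_sumE mnmE big_mkcond /= (bigD1 v) //= mnm1E eqxx big1 ?addn0.
  by rewrite /nbhd; case: ifP.
by move=> j /negbTE hj; rewrite mnm1E hj; case: ifP.
Qed.

Lemma NI_gen (i : 'I_n) : I 'X_[nbhd_mono i].
Proof. by apply: ideal_span_gen; exists i; rewrite NI_gen_mono. Qed.

Lemma mcover_gen i : mcover 1 (nbhd_mono i).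
Proof.
exists (fun j => (j == i : nat)); split.
  by rewrite (bigD1 i) //= eqxx big1 // => j /negbTE ->.
by move=> v; under eq_bigr => j _ do rewrite mulnC; rewrite sum_indicator mnmE; lia.
Qed.

Lemma NIpow_supp k x : ideal_exp I k x -> supp_in (mcover k) x.
Proof.
elim: k x => [|k IH] x /=; first by move=> _ m _; exact: mcover0.
rewrite -add1n; apply: supp_in_mul => {x} [|x]; last exact: IH.
apply: ideal_span_sub; first exact/supp_in_ideal/mcover_up.
by move=> y [i ->]; rewrite NI_gen_mono => m; rewrite msuppX inE => /eqP ->; exact: mcover_gen.
Qed.

Lemma NIpow_pow_supp k i x :
  ideal_exp (ideal_exp I k) i x -> supp_in (mcover (k * i)) x.
Proof.
elim: i x => [|i IH] x /=; first by move=> _ m _; rewrite muln0; exact: mcover0.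
by rewrite mulnS; apply: supp_in_mul => [y|y]; [exact: NIpow_supp | exact: IH].
Qed.

Lemma mcover_NIpow k m : mcover k m -> ideal_exp I k 'X_[m].
Proof.
elim: k m => [|k IH] m //= [c [s h]].
have [i ci] : exists i, (0 < c i)%N.
  case: (pickP (fun i => 0 < c i)%N) => [i hi|h0]; first by exists i.
  move: s; rewrite big1 // => j _; apply/eqP; by move: (h0 j); rewrite /= lt0n => /negbFE.
pose c' j := (c j - (j == i))%N.
have ce j : c j = (c' j + (j == i))%N by rewrite /c'; case: (eqVneq j i) => [->|]; lia.
have hle v : (\sum_j c' j * nbhd g j v + nbhd g i v <= m v)%N.
  have := h v; under eq_bigr => j _ do rewrite ce mulnDl.
  rewrite big_split /=; under [X in (_ + X)%N]eq_bigr => j _ do rewrite mulnC.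
  by rewrite sum_indicator.
have gle : (nbhd_mono i <= m)%MM.
  by apply/mnm_lepP => v; rewrite mnmE; have := hle v; lia.
rewrite -(submK gle) addmC mpolyXD.
apply: ideal_span_gen; exists 'X_[nbhd_mono i], 'X_[m - nbhd_mono i]; split => //.
  exact: NI_gen.
apply: IH; exists c'; split.
  have s1 : (\sum_j ((j == i) : nat) = 1)%N.
    by rewrite (bigD1 i) //= eqxx big1 // => j /negbTE ->.
  have : (\sum_j c j = \sum_j c' j + 1)%N.
    by under eq_bigr => j _ do rewrite ce; rewrite big_split /= s1.
  lia.
by move=> v; rewrite mnmBE mnmE; have := hle v; lia.
Qed.

Lemma supp_NIpow k x : supp_in (mcover k) x -> ideal_exp I k x.
Proof.
move=> hx; have [_ _ hM] := ideal_exp_is_ideal I k.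
rewrite [x]mpolyE; apply: ideal_sum; first exact: ideal_exp_is_ideal.
by move=> m hm; rewrite -mul_mpolyC; apply/hM/mcover_NIpow/hx/mem_of_In.
Qed.
End MonomialIdeals.

Section LowOrder.
Variable S : idomainType.

Definition vanishes_below (c : nat) (q : {poly S}) := forall d, (d < c)%N -> q`_d = 0.

Lemma vanishes_below_mul a b p q :
  vanishes_below a p -> vanishes_below b q -> vanishes_below (a + b) (p * q).
Proof.
move=> hp hq d hd; rewrite coefM big1 // => j _.
case: (ltnP j a) => hj; first by rewrite hp // mul0r.
by rewrite hq ?mulr0 //; have := ltn_ord j; lia.
Qed.

Lemma coef_mul_low a b p q :
  vanishes_below a p -> vanishes_below b q -> (p * q)`_(a + b) = p`_a * q`_b.
Proof.
move=> hp hq; have ha : (a < (a + b).+1)%N by lia.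
rewrite coefM (bigD1 (Ordinal ha)) //= addKn big1 ?addr0 // => j /eqP hj.
case: (ltnP j a) => h; first by rewrite hp // mul0r.
rewrite hq ?mulr0 //; have := ltn_ord j.
have : (j : nat) != a by apply/eqP => e; apply: hj; apply: val_inj.
lia.
Qed.

Lemma vanishes_below_exp a p m : vanishes_below a p ->
  vanishes_below (a * m) (p ^+ m) /\ (p ^+ m)`_(a * m) = p`_a ^+ m.
Proof.
move=> hp; elim: m => [|m [IH1 IH2]].
  by rewrite muln0 expr0 coefC /=; split => // d.
rewrite exprS mulnS; split; first exact: vanishes_below_mul.
by rewrite coef_mul_low // IH2 exprS.
Qed.
End LowOrder.

(* The weighted grading x_i |-> x_i t^(w i), an injective ring morphism
   {mpoly K[n]} -> {mpoly K[n]}[t] sending a monomial x^m to x^m t^(wdeg m). *)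
Section WeightGrading.
Variables (K : fieldType) (n : nat) (w : 'I_n -> nat).
Local Notation R := {mpoly K[n]}.

Definition wdeg (m : 'X_{1..n}) : nat := (\sum_v w v * m v)%N.

Lemma wdeg_add m1 m2 : wdeg (m1 + m2)%MM = (wdeg m1 + wdeg m2)%N.
Proof. by rewrite /wdeg -big_split; apply: eq_bigr => v _; rewrite mnmDE mulnDr. Qed.

Definition const_embed : {rmorphism K -> {poly R}} := polyC \o @mpolyC n K.

Definition wgrade (p : R) : {poly R} :=
  mmap const_embed (fun i => ('X_i)%:P * 'X^(w i)) p.

Lemma wgradeM a b : wgrade (a * b) = wgrade a * wgrade b.
Proof. exact: (mmap_is_multiplicative _ _).1. Qed.

Lemma wgrade1 : wgrade 1 = 1.
Proof. exact: (mmap_is_multiplicative _ _).2. Qed.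

Lemma wgrade0 : wgrade 0 = 0.
Proof. exact: raddf0. Qed.

Lemma wgradeD a b : wgrade (a + b) = wgrade a + wgrade b.
Proof. exact: raddfD. Qed.

Lemma wgrade_sum (s : seq nat) (F : nat -> R) :
  wgrade (\sum_(i <- s) F i) = \sum_(i <- s) wgrade (F i).
Proof. exact: raddf_sum. Qed.

Lemma wgradeX a m : wgrade (a ^+ m) = wgrade a ^+ m.
Proof.
elim: m => [|m IH]; first by rewrite !expr0 wgrade1.
by rewrite !exprS wgradeM IH.
Qed.

Lemma wgrade_coef p d :
  (wgrade p)`_d = \sum_(m <- msupp p) (p@_m *: 'X_[m]) * (d == wdeg m)%:R.
Proof.
rewrite /wgrade /mmap coef_sum; apply: eq_bigr => m _.
have -> : mmap1 (fun i => ('X_i)%:P * 'X^(w i)) m = ('X_[m])%:P * 'X^(wdeg m) :> {poly R}.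
  rewrite /mmap1; under eq_bigr => i _ do rewrite exprMn -rmorphXn -exprM.
  rewrite big_split /= -rmorph_prod prodrXr; congr (_ * _).
  by rewrite [in RHS]mpolyXE_id.
by rewrite /const_embed /= mulrA -rmorphM mul_mpolyC coefCM coefXn.
Qed.

Lemma wgrade_vanishes_below p c :
  (forall m, m \in msupp p -> (c <= wdeg m)%N) -> vanishes_below c (wgrade p).
Proof.
move=> h d hd; rewrite wgrade_coef big1_seq // => m /andP [_ hm].
have := h m hm; case: (eqVneq d (wdeg m)) => [e|_] hc; first by lia.
by rewrite mulr0.
Qed.

Lemma wgrade_coef_neq0 p m0 : m0 \in msupp p -> (wgrade p)`_(wdeg m0) != 0.
Proof.
move=> hm; apply/eqP => /(congr1 (mcoeff m0)).
rewrite wgrade_coef raddf_sum (bigD1_seq m0) ?msupp_uniq //= big1.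
  rewrite eqxx mulr1 mcoeffZ mcoeffX eqxx mulr1 addr0 raddf0 => /eqP.
  by rewrite mcoeff_msupp in hm; rewrite (negbTE hm).
move=> m hne; rewrite mulr_natr mcoeffMn mcoeffZ mcoeffX.
by rewrite (negbTE hne) mulr0 mul0rn.
Qed.
End WeightGrading.

Section DualGraphs.
Variables (K : fieldType) (n : nat) (g : rel 'I_n).
Hypothesis cover_of_weight_bound : forall k u, weight_bound g k u -> nbhd_cover g k u.
Local Notation R := {mpoly K[n]}.
Local Notation I := (NI (K:=K) g).

Lemma supp_vanishes_below (w : 'I_n -> nat) (r c : nat) (x : R) :
  (forall i, r <= \sum_v w v * nbhd g i v)%N -> supp_in (mcover g c) x ->
  vanishes_below (r * c) (wgrade w x).
Proof.
move=> hr hx; apply: wgrade_vanishes_below => m hm.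
exact: (cover_weight_bound (hx m hm) hr).
Qed.

(* If f is integral over I^k, then its monomials of least weighted degree
   have weighted degree >= r * k: compare the coefficients of degree
   (least degree) * (degree of the integral equation), where only f^m
   can contribute. *)
Lemma int_closure_min_wdeg k f (w : 'I_n -> nat) (r : nat) m0 :
  (forall i, r <= \sum_v w v * nbhd g i v)%N ->
  int_closure (ideal_exp I k) f -> m0 \in msupp f ->
  (forall m, m \in msupp f -> wdeg w m0 <= wdeg w m)%N -> (r * k <= wdeg w m0)%N.
Proof.
move=> hr [m [a [hm ha heq]]] hm0 hmin.
rewrite leqNgt; apply/negP => hlt; set d := wdeg w m0 in hlt.
have low : vanishes_below d (wgrade w f) by apply: wgrade_vanishes_below.
have := congr1 (fun q => (wgrade w q)`_(d * m)) heq.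
rewrite /= wgrade0 coef0 wgradeD wgrade_sum coefD [X in _ + X]coef_sum.
rewrite [X in _ + X]big_nat [X in _ + X]big1; last first.
  move=> i /andP [h1 h2]; rewrite wgradeM wgradeX.
  have low_a := supp_vanishes_below hr (NIpow_pow_supp (ha i _)).
  have low_f := (vanishes_below_exp (m - i) low).1.
  apply: (vanishes_below_mul (low_a _) low_f); first by lia.
  have -> : (d * m = d * i + d * (m - i))%N by rewrite -mulnDr; congr muln; lia.
  by rewrite ltn_add2r mulnA ltn_mul2r hlt andbT; lia.
rewrite addr0 wgradeX (vanishes_below_exp m low).2 => /eqP.
by rewrite expf_eq0 (negbTE (wgrade_coef_neq0 w hm0)) andbF.
Qed.

Lemma int_closure_supp k f : int_closure (ideal_exp I k) f -> supp_in (mcover g k) f.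
Proof.
move=> hf u hu; apply: cover_of_weight_bound => w r hr.
have ex : exists d, has (fun m0 => wdeg w m0 == d) (msupp f).
  by exists (wdeg w u); apply/hasP; exists u.
case: (ex_minnP ex) => d /hasP [m0 hm0 /eqP e0] dmin.
have mmin m : m \in msupp f -> (wdeg w m0 <= wdeg w m)%N.
  by move=> hm; rewrite e0; apply: dmin; apply/hasP; exists m.
exact: leq_trans (int_closure_min_wdeg hr hf hm0 mmin) (mmin u hu).
Qed.

Theorem NI_normal : normal_ideal I.
Proof.
move=> k _ f; split; first by move/int_closure_supp/supp_NIpow.
move=> hf; exists 1%N, (fun _ => - f); split => //.
  move=> i /andP [h1 h2]; have -> : i = 1%N by lia.
  apply: ideal_span_gen; exists (- f), 1; split => //; last by rewrite mulr1.
  by have [_ _ hM] := ideal_exp_is_ideal I k; rewrite -mulN1r; exact: hM.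
by rewrite big_nat1 subnn expr0 expr1 mulr1 addrN.
Qed.

(* Needed below: for n = 0, NI(g) = 0 and (0 : 0) is the whole ring. *)
Hypothesis n_gt0 : (0 < n)%N.

(* If f * I lies in I^(k+1), every monomial u of f is in I^k: multiply u by
   the generator whose neighbourhood has least weight. *)
Lemma colon_supp k f : colon (ideal_exp I k.+1) I f -> supp_in (mcover g k) f.
Proof.
move=> h u hu.
have hP i : mcover g k.+1 (nbhd_mono g i + u)%MM.
  apply: (NIpow_supp (h _ (NI_gen K g i))).
  by rewrite mcoeff_msupp mcoeffMX -mcoeff_msupp.
apply: cover_of_weight_bound => w r hr.
pose F i := (\sum_v w v * nbhd g i v)%N.
case: (@arg_minnP _ (Ordinal n_gt0) xpredT F isT) => j _ hj.
have := cover_weight_bound (hP j) (fun i => hj i isT).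
rewrite -/(wdeg w _) wdeg_add.
have -> : wdeg w (nbhd_mono g j) = F j by apply: eq_bigr => v _; rewrite mnmE.
have := hr j; rewrite -/(F j) mulnS => h1 h2.
have : (r * k <= F j * k)%N by rewrite leq_mul2r h1 orbT.
by rewrite /wdeg in h2; lia.
Qed.

Theorem NI_strong_persistence : strong_persistence I.
Proof.
move=> k _ f; split; first by move/colon_supp/supp_NIpow.
by move=> hf a ha; apply: ideal_span_gen; exists a, f; split => //; exact: mulrC.
Qed.
End DualGraphs.

(* A prime ideal containing a finite intersection of ideals contains one of
   them (if it contained none, a product of witnesses would avoid it). *)
Lemma prime_contains_factor (R : comNzRingType) (J : eqType) (P : pset R)
    (Q : J -> pset R) (s : seq J) :
  is_prime_ideal P -> (forall i x z, Q i x -> Q i (z * x)) ->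
  (forall x, (forall i, i \in s -> Q i x) -> P x) ->
  exists2 i, i \in s & forall x, Q i x -> P x.
Proof.
move=> [_ P1 Pprime] Qmul sP.
suff [//|[y [Qy nPy]]] : (exists2 i, i \in s & forall x, Q i x -> P x) \/
    (exists y, (forall i, i \in s -> Q i y) /\ ~ P y) by case: nPy; apply: sP.
elim: s {sP} => [|i s IH]; first by right; exists 1; split.
case: IH => [[j js hj]|[y [Qy nPy]]].
- by left; exists j; rewrite // inE js orbT.
- have [hi|hi] := classic (forall x, Q i x -> P x).
    by left; exists i; rewrite ?mem_head.
  have [z hz] := not_all_ex_not _ _ hi.
  have [Qz nPz] := imply_to_and _ _ hz.
  right; exists (z * y); split; last by case/Pprime.
  move=> j; rewrite inE => /orP [/eqP ->|js]; first by rewrite mulrC; apply: Qmul.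
  exact/Qmul/Qy.
Qed.

(* For an ideal I with finitely many generators, strong persistence implies
   persistence: if P = (I^k : r) is prime, then P = (I^(k+1) : r I) is the
   intersection of the (I^(k+1) : r g) over the generators g, hence equal to
   one of them. *)
Theorem persistence_of_strong (R : comNzRingType) (T : finType) (gen : T -> R) :
  strong_persistence (ideal_span (fun r => exists i, r = gen i)) ->
  persistence (ideal_span (fun r => exists i, r = gen i)).
Proof.
set I := ideal_span _ => sp k hk P [hP [r hr]].
have [_ _ JM] := ideal_exp_is_ideal I k.+1.
pose Q i x := ideal_exp I k.+1 (x * (r * gen i)).
have PQ x : P x <-> forall i, Q i x.
  rewrite hr; have [sp1 sp2] := sp k hk (x * r); split.
    by move/sp2 => hc i; rewrite /Q mulrA; apply/hc/ideal_span_gen; exists i.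
  move=> hQ; apply: sp1; apply: mul_ideal_span; first exact: ideal_exp_is_ideal.
  by move=> _ [i ->]; rewrite -mulrA; exact: hQ.
have Qmul i x z : Q i x -> Q i (z * x) by rewrite /Q -mulrA; exact: JM.
have [i _ QP] := prime_contains_factor (s := enum T) hP Qmul
  (fun x hx => proj2 (PQ x) (fun i => hx i (mem_enum _ i))).
split => //; exists (r * gen i) => x; split; [by move/PQ; apply | exact: QP].
Qed.

Theorem theorem3p2 (K : fieldType) (n : nat) (hn : (3 <= n)%N) :
  normal_ideal (NI (K:=K) (@cycle_rel n)) /\
  strong_persistence (NI (K:=K) (@cycle_rel n)) /\
  persistence (NI (K:=K) (@cycle_rel n)).
Proof.
have duality k u := @cycle_cover n u k hn.
have n_gt0 : (0 < n)%N by lia.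
have sp := NI_strong_persistence (K := K) duality n_gt0.
split; first exact: NI_normal duality.
by split; last exact: persistence_of_strong sp.
Qed.
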